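(* Let $n\ge 2$, $I=\{1,\dots,n-1\}$, and let $Y_n^>$ be the positive subalgebra of the Yangian of $\mathfrak{sl}_n$ (defined in the context). Let $\mathbf{Y}_n^>$ be the $\mathbb{Z}[\frac12]$-subalgebra of $Y_n^>$ generated by the divided powers $e_{i,r}^t/t!$ for $i\in I$, $r,t\in\mathbb{N}$. Then for every positive root $\beta=[i,j]$ ($1\le i\le j\le n-1$) and all $r,t\in\mathbb{N}$, the divided power $$\mathbf{e}_\beta(r)^{(t)}:=\frac{e_\beta(r)^t}{t!}$$ lies in $\mathbf{Y}_n^>$.
   Context: $\mathbb{N}=\{0,1,2,\dots\}$. $(c_{ij})_{i,j\in I}$ is the Cartan matrix of $\mathfrak{sl}_n$: $c_{ii}=2$, $c_{i,i\pm1}=-1$, $c_{ij}=0$ if $|i-j|>1$. $Y_n^>$ is the associative $\mathbb{C}$-algebra generated by $\{e_{i,r}: i\in I, r\in\mathbb{N}\}$ subject to the relations $[e_{i,r+1},e_{j,s}]-[e_{i,r},e_{j,s+1}]=\frac{c_{ij}}{2}(e_{i,r}e_{j,s}+e_{j,s}e_{i,r})$; $[e_{i,r},e_{j,s}]=0$ if $c_{ij}=0$; $[e_{i,r_1},[e_{i,r_2},e_{j,s}]]+[e_{i,r_2},[e_{i,r_1},e_{j,s}]]=0$ if $c_{ij}=-1$. The positive roots of $\mathfrak{sl}_n$ are $[i,j]:=\alpha_i+\alpha_{i+1}+\dots+\alpha_j$ for $1\le i\le j\le n-1$. For $\beta=[i,j]$ and $r\in\mathbb{N}$, $e_\beta(r):=[\cdots[[e_{i,r},e_{i+1,0}],e_{i+2,0}],\dots,e_{j,0}]$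 (so $e_{[i,i]}(r)=e_{i,r}$). *)

From HB Require Import structures.
From mathcomp Require Import all_boot all_order all_algebra.
From mathcomp Require Import complex.
From mathcomp Require Import Rstruct.
Set Implicit Arguments. Unset Strict Implicit. Unset Printing Implicit Defensive.
Import Order.TTheory GRing.Theory Num.Theory.
Local Open Scope ring_scope.

Definition CC : fieldType := (complex Rdefinitions.R).

Definition cartan (i j : nat) : int :=
  if i == j then (2 : int)
  else if (i == j.+1) || (j == i.+1) then (-1 : int) else (0 : int).

Definition comm {A : ringType} (x y : A) : A := x * y - y * x.

Definition inI (n i : nat) : bool := (1 <= i <= n.-1)%N.

Definition yangian_pos_rels (n : nat) (A : algType CC) (e : nat -> nat -> A) : Prop :=
  (forall i j r s, inI n i -> inI n j ->
     comm (e i r.+1) (e j s) - comm (e i r) (e j s.+1)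
     = ((cartan i j)%:~R / 2%:R : CC) *: (e i r * e j s + e j s * e i r))
  /\ (forall i j r s, inI n i -> inI n j -> cartan i j = (0 : int) ->
     comm (e i r) (e j s) = 0)
  /\ (forall i j r1 r2 s, inI n i -> inI n j -> cartan i j = (-1 : int) ->
     comm (e i r1) (comm (e i r2) (e j s)) + comm (e i r2) (comm (e i r1) (e j s)) = 0).

Definition divpow (A : algType CC) (x : A) (t : nat) : A :=
  ((t`!)%:R^-1 : CC) *: x ^+ t.

Inductive Zhalf_gen (n : nat) (A : algType CC) (e : nat -> nat -> A) : A -> Prop :=
  | zg_gen i r t : inI n i -> Zhalf_gen n e (divpow (e i r) t)
  | zg_one : Zhalf_gen n e 1
  | zg_add x y : Zhalf_gen n e x -> Zhalf_gen n e y -> Zhalf_gen n e (x + y)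
  | zg_opp x : Zhalf_gen n e x -> Zhalf_gen n e (- x)
  | zg_mul x y : Zhalf_gen n e x -> Zhalf_gen n e y -> Zhalf_gen n e (x * y)
  | zg_half x : Zhalf_gen n e x -> Zhalf_gen n e ((2%:R^-1 : CC) *: x).

(** Root vector e_[i,j](r) = [...[[e_{i,r}, e_{i+1,0}], e_{i+2,0}], ..., e_{j,0}]. *)
Definition eroot (A : ringType) (e : nat -> nat -> A) (i j r : nat) : A :=
  foldl (fun x k => comm x (e k 0%N)) (e i r) (iota i.+1 (j - i)).

From mathcomp Require Import all_boot all_order all_algebra complex Rstruct zify.
Set Implicit Arguments. Unset Strict Implicit. Unset Printing Implicit Defensive.
Import GRing.Theory Num.Theory.
Local Open Scope ring_scope.

(* With x := e_[i,j](r) and y := e_{j+1,0} we have e_[i,j+1](r) = [x, y],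
   and the Serre relations together with the commutation of distant
   generators show that [x, y] commutes with x and with y.  For such a pair
   (ad y)^t (x^t) = t! [y, x]^t, and expanding (ad y)^t / t! binomially gives
     [x, y]^t / t! = sum_k (-1)^k y^(k) x^(t) y^(t-k),   a^(k) := a^k / k!,
   an integral combination of products of divided powers of x and y.
   Induction on j concludes. *)

Section Commutator.
Variable R : nzRingType.
Implicit Types a b c : R.

Lemma commC a b : comm a b = - comm b a.
Proof. by rewrite /comm opprB. Qed.

Lemma comm0r a : comm 0 a = 0.
Proof. by rewrite /comm mul0r mulr0 subrr. Qed.

Lemma commr0 a : comm a 0 = 0.
Proof. by rewrite /comm mul0r mulr0 subrr. Qed.

Lemma commNr a b : comm a (- b) = - comm a b.
Proof. by rewrite /comm mulrN mulNr opprB opprK addrC. Qed.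

Lemma commNl a b : comm (- a) b = - comm a b.
Proof. by rewrite commC commNr -commC. Qed.

Lemma commMnr a b k : comm a (b *+ k) = comm a b *+ k.
Proof. by rewrite /comm mulrnAr mulrnAl mulrnBl. Qed.

Lemma commMr a b c : comm a (b * c) = comm a b * c + b * comm a c.
Proof. by rewrite /comm mulrBl mulrBr !mulrA addrA subrK. Qed.

Lemma commJ a b c : comm a (comm b c) = comm (comm a b) c + comm b (comm a c).
Proof.
rewrite /comm !mulrBr !mulrBl !mulrA [RHS]addrACA !opprB !subrKA.
by rewrite addrACA [RHS]addrACA [- _ - _]addrC.
Qed.

Lemma comm_eq0 a b : comm a b = 0 <-> GRing.comm a b.
Proof.
split=> [/eqP | ab]; first by rewrite subr_eq0 => /eqP.
by rewrite /comm ab subrr.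
Qed.

End Commutator.

Lemma commZr (F : nzRingType) (A : algType F) (c : F) (u v : A) :
  comm u (c *: v) = c *: comm u v.
Proof. by rewrite /comm -scalerAr -scalerAl scalerBr. Qed.

Lemma iter_commZr (F : nzRingType) (A : algType F) (c : F) (y u : A) m :
  iter m (comm y) (c *: u) = c *: iter m (comm y) u.
Proof. by elim: m => //= m ->; rewrite commZr. Qed.

Section CharacteristicZero.
Variable V : lmodType CC.
Implicit Types u v : V.

Lemma mulrSnI k : injective (fun u : V => u *+ k.+1).
Proof.
move=> u v /=; rewrite -(scaler_nat k.+1 u) -(scaler_nat k.+1 v).
by apply: scalerI; rewrite pnatr_eq0.
Qed.

Lemma addrr_eq0 u : u + u = 0 -> u = 0.
Proof. by move=> uu0; apply: (@mulrSnI 1); rewrite mul0rn -uu0 mulr2n. Qed.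

End CharacteristicZero.

Section DividedPowers.
Variables (A : algType CC) (y : A).

Lemma divpowS_mulrn k : divpow y k.+1 *+ k.+1 = (k`!%:R^-1 : CC) *: y ^+ k.+1.
Proof.
rewrite /divpow -scaler_nat scalerA factS natrM invfM mulrA mulfV ?mul1r //.
by rewrite pnatr_eq0.
Qed.

Lemma divpowSl k : y * divpow y k = divpow y k.+1 *+ k.+1.
Proof. by rewrite divpowS_mulrn /divpow -scalerAr exprS. Qed.

Lemma divpowSr k : divpow y k * y = divpow y k.+1 *+ k.+1.
Proof. by rewrite divpowS_mulrn /divpow -scalerAl exprSr. Qed.

End DividedPowers.

(* (ad y)^t w / t!, expanded by the binomial formula for ad y = L_y - R_y
   (see divided_adE). *)
Definition divided_ad (A : algType CC) (y w : A) (t : nat) : A :=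
  \sum_(0 <= k < t.+1) (-1) ^+ (t - k) * (divpow y k * w * divpow y (t - k)).

Section DividedAd.
Variables (A : algType CC) (y w : A).

Lemma divided_adS t : divided_ad y w t.+1 *+ t.+1 = comm y (divided_ad y w t).
Proof.
rewrite /divided_ad /comm mulr_sumr mulr_suml -sumrB -sumrMnl.
(* Split the factor t.+1 of the k-th term as k + (t.+1 - k): each part is
   absorbed by one of the two divided powers of y, as in Pascal's rule. *)
rewrite (eq_big_nat _ _ (F2 := fun k =>
   ((-1) ^+ (t.+1 - k) * (divpow y k * w * divpow y (t.+1 - k))) *+ k +
   ((-1) ^+ (t.+1 - k) * (divpow y k * w * divpow y (t.+1 - k))) *+ (t.+1 - k)));
  last by move=> k /andP[_ hk]; rewrite -mulrnDr subnKC // -ltnS.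
rewrite big_split /= [X in X + _]big_nat_recl // [X in _ + X]big_nat_recr //=.
rewrite mulr0n add0r subnn mulr0n addr0 -big_split /=.
apply: eq_big_nat => k /andP[_ hk].
rewrite subSS subSn // exprS mulN1r; congr (_ + _).
  rewrite [RHS]mulrA (commr_sign y) -[RHS]mulrA [y * _]mulrA [y * _]mulrA.
  by rewrite divpowSl !mulrnAl mulrnAr.
rewrite mulNr mulNrn; congr (- _).
by rewrite -[RHS]mulrA -(mulrA (divpow y k * w)) divpowSr !mulrnAr.
Qed.

Lemma divided_adE t : divided_ad y w t *+ t`! = iter t (comm y) w.
Proof.
elim: t => [|t IH].
  by rewrite /divided_ad big_nat1 /divpow expr0 invr1 !scale1r mul1r mulr1 mul1r.
by rewrite factS mulrnA divided_adS -commMnr IH.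
Qed.

End DividedAd.

Definition heis_pair (A : nzRingType) (x y : A) : Prop :=
  comm x (comm x y) = 0 /\ comm y (comm x y) = 0.

Lemma heis_pair_comm (A : algType CC) (X v y : A) :
  heis_pair X v -> comm y X = 0 -> comm y (comm y v) = 0 ->
  comm v (comm v y) = 0 -> heis_pair (comm X v) y.
Proof.
move=> [XXv vXv] yX yyv vvy.
have X'y : comm (comm X v) y = comm X (comm v y).
  by rewrite [RHS]commJ [comm X y]commC yX oppr0 commr0 addr0.
have X'u : comm (comm X v) (comm v y) = 0.
  apply: addrr_eq0; rewrite {1}commJ [comm _ v]commC vXv oppr0 comm0r add0r X'y.
  by rewrite commJ vvy commr0 addr0 [comm v X]commC commNl addNr.
split; rewrite X'y commJ.
  by rewrite [comm _ X]commC XXv oppr0 comm0r add0r X'u commr0.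
by rewrite yX comm0r add0r [comm v y]commC commNr yyv oppr0 commr0.
Qed.

Section Kostant.
Variables (A : algType CC) (x y : A).
Hypothesis xy_heis : heis_pair x y.
Let z := comm y x.

Let x_z : GRing.comm x z.
Proof. by rewrite /z commC; apply/commrN/comm_eq0; case: xy_heis. Qed.

Let y_z : GRing.comm y z.
Proof. by rewrite /z commC; apply/commrN/comm_eq0; case: xy_heis. Qed.

Lemma comm_expr p : comm y (x ^+ p.+1) = (x ^+ p * z) *+ p.+1.
Proof.
elim: p => [|p IH]; first by rewrite expr0 mul1r expr1.
rewrite exprSr commMr IH mulrnAl -(mulrA (x ^+ p)) -x_z mulrA -exprSr.
by rewrite [in RHS]mulrSr.
Qed.

Lemma iter_comm_expr m p :
  iter m (comm y) (x ^+ (p + m)) *+ p`! = (x ^+ p * z ^+ m) *+ (p + m)`!.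
Proof.
elim: m p => [|m IH] p; first by rewrite addn0 expr0 mulr1.
apply: (@mulrSnI _ p).
have -> : (p + m.+1 = p.+1 + m)%N by rewrite addnS.
rewrite -mulrnA mulnC -factS /= -commMnr IH commMnr commMr.
have /comm_eq0-> := commrX m y_z.
rewrite mulr0 addr0 comm_expr -mulrnAl -mulrA -exprS -!mulrnA.
by rewrite mulrnAl -mulrnA mulnC.
Qed.

Lemma divided_ad_divpow t : divided_ad y (divpow x t) t = divpow z t.
Proof.
have := iter_comm_expr t 0; rewrite add0n expr0 mul1r fact0 mulr1n => ad_xt.
apply: (@mulrSnI _ t`!.-1); rewrite /= prednK ?fact_gt0 //.
by rewrite divided_adE /divpow iter_commZr ad_xt scalerMnr.
Qed.

Lemma divpow_comm t : divpow (comm x y) t = (-1) ^+ t * divided_ad y (divpow x t) t.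
Proof. by rewrite divided_ad_divpow /divpow -scalerAr -exprNn /z -commC. Qed.

End Kostant.

Section ZhalfGen.
Variables (n : nat) (A : algType CC) (e : nat -> nat -> A).
Local Notation S := (Zhalf_gen n e).

Lemma Zhalf_gen0 : S 0.
Proof. by rewrite -(subrr (1 : A)); apply: zg_add; [apply: zg_one | apply/zg_opp/zg_one]. Qed.

Lemma Zhalf_gen_sign k : S ((-1) ^+ k).
Proof.
elim: k => [|k IH]; first by rewrite expr0; apply: zg_one.
by rewrite exprS; apply: zg_mul IH; apply/zg_opp/zg_one.
Qed.

Lemma Zhalf_gen_divpow_comm (x y : A) : heis_pair x y ->
  (forall t, S (divpow x t)) -> (forall t, S (divpow y t)) ->
  forall t, S (divpow (comm x y) t).
Proof.
move=> xy_heis Sx Sy t; rewrite divpow_comm //.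
apply: zg_mul; first exact: Zhalf_gen_sign.
apply: (big_ind S); [exact: Zhalf_gen0 | exact: zg_add | move=> k _].
apply: zg_mul; first exact: Zhalf_gen_sign.
by apply: zg_mul; [apply: zg_mul|].
Qed.

End ZhalfGen.

Section RootVectors.
Variables (A : nzRingType) (e : nat -> nat -> A) (i r : nat).

Lemma eroot_id : eroot e i i r = e i r.
Proof. by rewrite /eroot subnn. Qed.

Lemma erootS j : (i <= j)%N -> eroot e i j.+1 r = comm (eroot e i j r) (e j.+1 0%N).
Proof.
move=> hij; rewrite /eroot subSn // -(addn1 (j - i)) iotaD foldl_cat /=.
by rewrite addSn subnKC.
Qed.

End RootVectors.

Lemma cartan_succr k : cartan k k.+1 = -1.
Proof. by rewrite /cartan (ltn_eqF (ltnSn k)) eqxx orbT. Qed.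

Lemma cartan_succl k : cartan k.+1 k = -1.
Proof. by rewrite /cartan (gtn_eqF (ltnSn k)) eqxx. Qed.

Lemma cartan_far k l : (l.+2 <= k)%N -> cartan k l = 0.
Proof.
move=> hlk; have hl : (l < k)%N := ltnW hlk.
by rewrite /cartan (gtn_eqF hl) (gtn_eqF hlk) (@ltn_eqF l k.+1 (ltnW hl)).
Qed.

Section YangianRootVectors.
Variables (n : nat) (A : algType CC) (e : nat -> nat -> A).
Hypothesis rels : yangian_pos_rels n e.

Lemma yangian_serre a b ra s : inI n a -> inI n b -> cartan a b = -1 ->
  comm (e a ra) (comm (e a ra) (e b s)) = 0.
Proof. by move=> ha hb hab; case: rels => _ [_ serre]; apply/addrr_eq0/serre. Qed.

Lemma yangian_comm_far k l rk rl : inI n k -> inI n l -> (l.+2 <= k)%N ->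
  comm (e k rk) (e l rl) = 0.
Proof. by move=> hk hl hlk; case: rels => _ [far _]; apply/far/cartan_far. Qed.

Lemma comm_e_eroot i d r k : (1 <= i)%N -> ((i + d).+2 <= k)%N -> (k <= n.-1)%N ->
  comm (e k 0%N) (eroot e i (i + d) r) = 0.
Proof.
move=> hi; elim: d => [|d IH] hdk hkn.
  by rewrite addn0 eroot_id; apply: yangian_comm_far; rewrite /inI; lia.
have far_d : comm (e k 0%N) (eroot e i (i + d) r) = 0 by apply: IH; lia.
rewrite addnS erootS ?leq_addr // commJ far_d comm0r add0r.
by rewrite yangian_comm_far ?commr0 // /inI; lia.
Qed.

Lemma heis_pair_eroot i d r : (1 <= i)%N -> ((i + d).+1 <= n.-1)%N ->
  heis_pair (eroot e i (i + d) r) (e (i + d).+1 0%N).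
Proof.
move=> hi; elim: d => [|d IH] hd.
  rewrite addn0 eroot_id; split.
    by apply: yangian_serre; rewrite ?cartan_succr // /inI; lia.
  by rewrite [comm (e i r) _]commC commNr yangian_serre ?oppr0 ?cartan_succl // /inI; lia.
rewrite addnS erootS ?leq_addr //; apply: heis_pair_comm.
- by apply: IH; lia.
- by apply: comm_e_eroot; lia.
- by apply: yangian_serre; rewrite ?cartan_succl // /inI; lia.
- by apply: yangian_serre; rewrite ?cartan_succr // /inI; lia.
Qed.

Lemma Zhalf_gen_eroot i d r t : (1 <= i)%N -> (i + d <= n.-1)%N ->
  Zhalf_gen n e (divpow (eroot e i (i + d) r) t).
Proof.
move=> hi; elim: d t => [|d IH] t hd.
  by rewrite addn0 eroot_id; apply: zg_gen; rewrite /inI; lia.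
rewrite addnS erootS ?leq_addr //; apply: Zhalf_gen_divpow_comm => [|s|s].
- by apply: heis_pair_eroot; lia.
- by apply: IH; lia.
- by apply: zg_gen; rewrite /inI; lia.
Qed.

End YangianRootVectors.

Theorem proposition2p7 (n : nat) (hn : (2 <= n)%N)
  (A : algType CC) (e : nat -> nat -> A) (rels : yangian_pos_rels n e) :
  forall i j r t : nat, (1 <= i)%N -> (i <= j)%N -> (j <= n.-1)%N ->
    Zhalf_gen n e (divpow (eroot e i j r) t).
Proof.
move=> i j r t hi hij hjn.
by rewrite -(subnKC hij); apply: Zhalf_gen_eroot; rewrite ?subnKC.
Qed.
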